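(* Let $K\in\{\mathbb R,\mathbb C,\mathbb H\}$ and let $(E,d)$ be a metric vector space over $K$ such that $d$ is $C_0$-translation invariant and $(C_1,C_2,C_3)$-lipschitz multiplicative. Let $\delta(x,y)=\lim_{n\to\infty}\frac1n d(nx,ny)$ and $E_0=\{x\in E:\ \delta(ux,0)=0\text{ for all }u\in\mathbb U\}$ (equivalently, the maximal linear subspace of $E$ on which $d$ is bounded). Then $E_0$ is a closed subspace of $E$.
   Context: A metric vector space is a topological vector space over $K$ whose topology is generated by the metric $d$. $\mathbb U=\{u\in K:|u|=1\}$. $d$ is $C_0$-translation invariant if $d(x+z,y+z)\le d(x,y)+C_0$ for all $x,y,z$. $(C_1,C_2,C_3)$-lipschitz multiplicative ($C_1\ge1$, $C_2,C_3\ge0$) means $C_1^{-1}|\lambda|d(x,y)-C_2|\lambda|-C_3\le d(\lambda x,\lambda y)\le C_1|\lambda|d(x,y)+C_2|\lambda|+C_3$ for all $\lambda\in K$, $x,y\in E$. (Under these hypotheses the limit defining $\delta$ exists.) *)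

From HB Require Import structures.
From mathcomp Require Import all_boot all_order all_algebra.
From mathcomp Require Import ring.
From mathcomp Require Import complex.
From mathcomp Require Import all_classical all_reals topology normedtype sequences.

Set Implicit Arguments.
Unset Strict Implicit.
Unset Printing Implicit Defensive.

Import Order.TTheory GRing.Theory Num.Theory.
Import numFieldNormedType.Exports.
Local Open Scope classical_set_scope.
Local Open Scope ring_scope.

Section Quaternions.
Variable R : realType.

Record quat := Quat { q0 : R; q1 : R; q2 : R; q3 : R }.

Definition quat_to (q : quat) := (q0 q, q1 q, q2 q, q3 q).
Definition quat_of (t : R * R * R * R) :=
  let: (a, b, c, d) := t in Quat a b c d.
Lemma quat_toK : cancel quat_to quat_of. Proof. by case. Qed.

HB.instance Definition _ := Choice.copy quat (can_type quat_toK).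

Definition qzero := Quat 0 0 0 0.
Definition qopp (p : quat) := Quat (- q0 p) (- q1 p) (- q2 p) (- q3 p).
Definition qadd (p q : quat) :=
  Quat (q0 p + q0 q) (q1 p + q1 q) (q2 p + q2 q) (q3 p + q3 q).

Lemma qaddA : associative qadd.
Proof. by move=> [? ? ? ?] [? ? ? ?] [? ? ? ?]; rewrite /qadd /= !addrA. Qed.
Lemma qaddC : commutative qadd.
Proof.
by move=> [? ? ? ?] [? ? ? ?]; rewrite /qadd /= [X in Quat X _ _ _]addrC
  [X in Quat _ X _ _]addrC [X in Quat _ _ X _]addrC [X in Quat _ _ _ X]addrC.
Qed.
Lemma qadd0 : left_id qzero qadd.
Proof. by move=> [? ? ? ?]; rewrite /qadd /= !add0r. Qed.
Lemma qaddN : left_inverse qzero qopp qadd.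
Proof. by move=> [? ? ? ?]; rewrite /qadd /= !addNr. Qed.

HB.instance Definition _ := GRing.isZmodule.Build quat qaddA qaddC qadd0 qaddN.

Definition qone := Quat 1 0 0 0.
(* Hamilton product: i^2 = j^2 = k^2 = ijk = -1. *)
Definition qmul (p q : quat) :=
  let: Quat a1 b1 c1 d1 := p in let: Quat a2 b2 c2 d2 := q in
  Quat (a1 * a2 - b1 * b2 - c1 * c2 - d1 * d2)
       (a1 * b2 + b1 * a2 + c1 * d2 - d1 * c2)
       (a1 * c2 - b1 * d2 + c1 * a2 + d1 * b2)
       (a1 * d2 + b1 * c2 - c1 * b2 + d1 * a2).

Lemma qmulA : associative qmul.
Proof. by move=> [? ? ? ?] [? ? ? ?] [? ? ? ?]; rewrite /qmul; congr Quat; ring. Qed.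
Lemma qmul1 : left_id qone qmul.
Proof. by move=> [? ? ? ?]; rewrite /qmul; congr Quat; ring. Qed.
Lemma qmulr1 : right_id qone qmul.
Proof. by move=> [? ? ? ?]; rewrite /qmul; congr Quat; ring. Qed.
Lemma qmulDl : left_distributive qmul +%R.
Proof.
move=> p q r; change (qmul (qadd p q) r = qadd (qmul p r) (qmul q r)).
by case: p q r => [? ? ? ?] [? ? ? ?] [? ? ? ?]; rewrite /qmul /qadd /=; congr Quat; ring.
Qed.
Lemma qmulDr : right_distributive qmul +%R.
Proof.
move=> p q r; change (qmul p (qadd q r) = qadd (qmul p q) (qmul p r)).
by case: p q r => [? ? ? ?] [? ? ? ?] [? ? ? ?]; rewrite /qmul /qadd /=; congr Quat; ring.
Qed.
Lemma qone_neq0 : qone != 0.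
Proof. apply/eqP => /(congr1 q0) /= /eqP; by rewrite oner_eq0. Qed.

HB.instance Definition _ := GRing.Zmodule_isNzRing.Build quat
  qmulA qmul1 qmulr1 qmulDl qmulDr qone_neq0.

Definition qnorm (q : quat) : R :=
  Num.sqrt (q0 q ^+ 2 + q1 q ^+ 2 + q2 q ^+ 2 + q3 q ^+ 2).

End Quaternions.

Inductive scalar_kind := KReal | KComplex | KQuat.

Definition scal (R : realType) (k : scalar_kind) : nzRingType :=
  match k with
  | KReal => R^o
  | KComplex => R[i]
  | KQuat => quat R
  end.

Definition absK (R : realType) (k : scalar_kind) : scal R k -> R :=
  match k return scal R k -> R with
  | KReal => fun x : R => `|x|
  | KComplex => fun z : R[i] => Normc.normc z
  | KQuat => fun q : quat R => qnorm q
  end.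

Section MetricVectorSpace.
Variables (R : realType) (k : scalar_kind).
Local Notation K := (scal R k).
Variables (E : lmodType K) (d : E -> E -> R).

Definition is_metric : Prop :=
  [/\ forall x y, 0 <= d x y,
      forall x y, d x y = 0 <-> x = y,
      forall x y, d x y = d y x &
      forall x y z, d x z <= d x y + d y z].

(* E, with the topology generated by d, is a topological vector space over K
   (K carrying the topology of its absolute value): addition E x E -> E and
   scalar multiplication K x E -> E are continuous. *)
Definition metric_vector_space : Prop :=
  is_metric /\
  (forall x y (e : R), 0 < e -> exists2 del : R, 0 < del &
     forall x' y', d x x' < del -> d y y' < del -> d (x + y) (x' + y') < e) /\
  (forall (a : K) x (e : R), 0 < e -> exists2 del : R, 0 < del &
     forall (a' : K) x', absK (a - a') < del -> d x x' < del ->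
       d (a *: x) (a' *: x') < e).

Definition translation_invariant (C0 : R) : Prop :=
  forall x y z, d (x + z) (y + z) <= d x y + C0.

Definition lipschitz_multiplicative (C1 C2 C3 : R) : Prop :=
  [/\ 1 <= C1, 0 <= C2, 0 <= C3 &
   forall (l : K) x y,
     C1^-1 * absK (l) * d x y - C2 * absK (l) - C3 <= d (l *: x) (l *: y) /\
     d (l *: x) (l *: y) <= C1 * absK (l) * d x y + C2 * absK (l) + C3].

Definition delta (x y : E) : R :=
  lim ((fun n : nat => d (x *+ n) (y *+ n) / n%:R) @ \oo).

Definition E0 : set E :=
  [set x | forall u : K, absK (u) = 1 -> delta (u *: x) 0 = 0].

Definition is_subspace (S : set E) : Prop :=
  S 0 /\ forall (a : K) x y, S x -> S y -> S (a *: x + y).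

Definition d_closed (S : set E) : Prop :=
  forall x, (forall e : R, 0 < e -> exists2 y, S y & d x y < e) -> S x.

End MetricVectorSpace.

From HB Require Import structures.
From mathcomp Require Import all_boot all_order all_algebra.
From mathcomp Require Import complex.
From mathcomp Require Import all_classical all_reals topology normedtype sequences.
From mathcomp Require Import lra.
Import Order.TTheory GRing.Theory Num.Theory.
Import numFieldNormedType.Exports.

Set Implicit Arguments.
Unset Strict Implicit.
Unset Printing Implicit Defensive.

Local Open Scope classical_set_scope.
Local Open Scope ring_scope.

(* Write [delta0 z] for [delta(z, 0)].  Up to the additive constant [C0], the
   sequence [d (z *+ n) 0] is subadditive, so by Fekete's lemma [d (z *+ n) 0 / n]
   converges to [delta0 z], which is at most [(d (z *+ m) 0 + C0) / m] for every
   [m > 0].  In the limit the constants disappear: [delta0] is subadditive and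
   [delta0 (c z) <= C1 |c| delta0 z], whence [E0] is a subspace.  If [x] is a
   limit of points of [E0], continuity of scalar multiplication gives, for each
   [m], some [y] in [E0] with [d (m u x) (m u y) < 1], so that
   [delta0 (u x) <= delta0 (u x - u y) <= (1 + 2 C0) / m]; hence [delta0 (u x) = 0]. *)

Lemma cvg_divn {R : realType} (c : R) : c / n%:R @[n --> \oo] --> 0.
Proof.
rewrite -(mulr0 c); apply: cvgMl_tmp.
apply/gtr0_cvgV0; last exact: cvgr_idn.
by near=> n; rewrite ltr0n; near: n; apply: nbhs_infty_gt.
Unshelve. all: by end_near. Qed.

Lemma ler_cvg_divn {R : realType} (f g : nat -> R) (a b c : R) :
  f @ \oo --> a -> g @ \oo --> b -> (forall n, f n <= g n + c / n%:R) -> a <= b.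
Proof.
move=> fa gb fg; rewrite -[b]addr0.
by apply: (ler_cvg_to fa (cvgD gb (cvg_divn c))); apply: nearW.
Qed.

Section Fekete.
Variables (R : realType) (b : nat -> R).
Implicit Types m n : nat.
Hypothesis b_ge0 : forall n, 0 <= b n.
Hypothesis b_subadd : forall m n, b (m + n) <= b m + b n.

Definition ratios := [set b n / n%:R | n in [set n | (0 < n)%N]].
Definition ratio_inf := inf ratios.

Lemma subadd_mulnD q m r : b (q * m + r) <= q%:R * b m + b r.
Proof.
elim: q => [|q IH]; first by rewrite mul0n add0n mul0r add0r.
rewrite mulSn -addnA mulrS mulrDl mul1r; apply: (le_trans (b_subadd _ _)).
by rewrite -addrA lerD2l.
Qed.

Lemma ratio_ub m e : (0 < m)%N -> 0 < e ->
  \forall n \near \oo, b n / n%:R <= b m / m%:R + e.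
Proof.
move=> m_gt0 e_gt0; pose M := \sum_(r < m) b r.
have bM r : (r < m)%N -> b r <= M.
  move=> rm; rewrite /M (bigD1 (Ordinal rm)) //= lerDl.
  by apply: sumr_ge0 => i _.
near=> n.
have n_gt0 : 0 < n%:R :> R by rewrite ltr0n; near: n; apply: nbhs_infty_gt.
have m_gt0' : 0 < m%:R :> R by rewrite ltr0n.
set q := (n %/ m)%N.
have bn : b n <= q%:R * b m + M.
  rewrite {1}(divn_eq n m); apply: (le_trans (subadd_mulnD _ _ _)).
  by rewrite lerD2l bM // ltn_mod.
have qm : q%:R * m%:R <= n%:R :> R by rewrite -natrM ler_nat leq_divM.
have Mn : M / n%:R <= e.
  by near: n; apply: (cvgr_le _ (cvg_divn M)); rewrite e_gt0.
have qbm : q%:R * b m <= b m / m%:R * n%:R.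
  by rewrite mulrAC ler_pdivlMr //; have := b_ge0 m; nra.
rewrite ler_pdivrMr // mulrDl; move: Mn; rewrite ler_pdivrMr // => Mn; lra.
Unshelve. all: by end_near. Qed.

Let ratios_inf : has_inf ratios.
Proof.
split; first by exists (b 1 / 1%:R), 1%N.
by exists 0 => _ [n _ <-]; rewrite divr_ge0.
Qed.

Lemma ratio_inf_le m : (0 < m)%N -> ratio_inf <= b m / m%:R.
Proof. by move=> m_gt0; apply: (ge_inf ratios_inf.2); exists m. Qed.

Lemma fekete : b n / n%:R @[n --> \oo] --> ratio_inf.
Proof.
apply/cvgrPdist_le => e e_gt0; have e2_gt0 : 0 < e / 2 by rewrite divr_gt0.
have [_ [m m_gt0 <-] bm_lt] := inf_adherent e2_gt0 ratios_inf.
near=> n.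
have n_gt0 : (0 < n)%N by near: n; apply: nbhs_infty_gt.
have bn_ub : b n / n%:R <= b m / m%:R + e / 2 by near: n; exact: ratio_ub.
have := ratio_inf_le n_gt0.
by rewrite ler_distl => ?; apply/andP; split; lra.
Unshelve. all: by end_near. Qed.

End Fekete.

Lemma absK0 (R : realType) (k : scalar_kind) : absK (0 : scal R k) = 0.
Proof.
case: k => /=; first exact: normr0.
  by rewrite /Normc.normc /= expr0n /= addr0 sqrtr0.
by rewrite /qnorm /= expr0n /= !addr0 sqrtr0.
Qed.

Lemma absK1 (R : realType) (k : scalar_kind) : absK (1 : scal R k) = 1.
Proof.
case: k => /=; first exact: normr1.
  by rewrite /Normc.normc /= expr1n expr0n /= addr0 sqrtr1.
by rewrite /qnorm /= expr1n expr0n /= !addr0 sqrtr1.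
Qed.

Section AsymptoticDistance.
Variables (R : realType) (k : scalar_kind) (E : lmodType (scal R k)).
Variables (d : E -> E -> R) (C0 C1 C2 C3 : R).
Hypothesis d_metric : is_metric d.
Hypothesis d_transl : translation_invariant d C0.

Local Notation delta0 z := (delta d z 0).

Lemma d_ge0 x y : 0 <= d x y.
Proof. by case: d_metric. Qed.

Lemma dxx x : d x x = 0.
Proof. by case: d_metric => _ dP _ _; apply/dP. Qed.

Lemma C0_ge0 : 0 <= C0.
Proof. by have := d_transl 0 0 0; rewrite !dxx add0r. Qed.

Lemma d0D w z : d (w + z) 0 <= d w 0 + d z 0 + C0.
Proof.
case: d_metric => _ _ _ d_triangle.
apply: (le_trans (d_triangle _ (0 + z) _)).
by have := d_transl w 0 z; rewrite !add0r; lra.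
Qed.

Lemma d0B x y : d (x - y) 0 <= d x y + C0.
Proof. by rewrite -(subrr y); apply: d_transl. Qed.

Definition growth z n := d (z *+ n) 0 / n%:R.

Definition shifted_dist z n := d (z *+ n) 0 + C0.

Lemma shifted_dist_ge0 z n : 0 <= shifted_dist z n.
Proof. by rewrite addr_ge0 ?d_ge0 ?C0_ge0. Qed.

Lemma shifted_dist_subadd z m n :
  shifted_dist z (m + n) <= shifted_dist z m + shifted_dist z n.
Proof. by rewrite /shifted_dist mulrnDr; have := d0D (z *+ m) (z *+ n); lra. Qed.

Lemma growth_cvg_ratio_inf z : growth z @ \oo --> ratio_inf (shifted_dist z).
Proof.
rewrite -[ratio_inf _]subr0.
have -> : growth z = fun n => shifted_dist z n / n%:R - C0 / n%:R.
  by apply: funext => n; rewrite /shifted_dist mulrDl addrK.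
exact: cvgB (fekete (shifted_dist_ge0 z) (shifted_dist_subadd z)) (cvg_divn C0).
Qed.

Lemma delta0E z : delta0 z = ratio_inf (shifted_dist z).
Proof.
rewrite /delta (_ : (fun n => _) = growth z); last first.
  by apply: funext => n; rewrite mul0rn.
by apply: cvg_lim; [exact: Rhausdorff | exact: growth_cvg_ratio_inf].
Qed.

Lemma growth_cvg z : growth z @ \oo --> delta0 z.
Proof. by rewrite delta0E; exact: growth_cvg_ratio_inf. Qed.

Lemma delta0_le z m : (0 < m)%N -> delta0 z <= (d (z *+ m) 0 + C0) / m%:R.
Proof. by rewrite delta0E; apply: ratio_inf_le; exact: shifted_dist_ge0. Qed.

Lemma delta0_ge0 z : 0 <= delta0 z.
Proof.
apply: (cvgr_to_ge (@growth_cvg z)); apply: nearW => n.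
by rewrite divr_ge0 ?d_ge0.
Qed.

Lemma delta00 : delta0 0 = 0.
Proof.
rewrite /delta (_ : (fun n => _) = fun=> 0) ?lim_cst //.
by apply: funext => n; rewrite mul0rn dxx mul0r.
Qed.

Lemma delta0D w z : delta0 (w + z) <= delta0 w + delta0 z.
Proof.
apply: (ler_cvg_divn (c := C0) (@growth_cvg (w + z))
  (cvgD (@growth_cvg w) (@growth_cvg z))) => n.
by rewrite /growth /= -!mulrDl ler_wpM2r ?invr_ge0 // mulrnDl d0D.
Qed.

Lemma delta0Z c z : lipschitz_multiplicative d C1 C2 C3 ->
  delta0 (c *: z) <= C1 * absK c * delta0 z.
Proof.
case=> _ _ _ d_lip.
apply: (ler_cvg_divn (c := C2 * absK c + C3) (@growth_cvg (c *: z))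
  (cvgMl_tmp (a := C1 * absK c) (@growth_cvg z))) => n.
have [_] := d_lip c (z *+ n) 0; rewrite scaler0 -scalerMnr => d_le.
by rewrite /growth mulrA -mulrDl ler_wpM2r ?invr_ge0 //; lra.
Qed.

Lemma E0_le0 x : (forall u, absK u = 1 -> delta0 (u *: x) <= 0) -> E0 d x.
Proof. by move=> x_le0 u u1; apply/le_anti; rewrite x_le0 // delta0_ge0. Qed.

Lemma E0_subspace : lipschitz_multiplicative d C1 C2 C3 -> is_subspace (E0 d).
Proof.
move=> d_lip; split=> [|a x y x_E0 y_E0]; apply: E0_le0 => u u1.
  by rewrite scaler0 delta00.
have x0 : delta0 x = 0 by rewrite -[x]scale1r x_E0 // absK1.
rewrite scalerDr scalerA; apply: (le_trans (delta0D _ _)).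
rewrite y_E0 // addr0; apply: (le_trans (delta0Z _ _ d_lip)).
by rewrite x0 mulr0.
Qed.

Lemma E0_closed : metric_vector_space d -> d_closed d (E0 d).
Proof.
case=> _ [_ scale_cont] x x_cl; apply: E0_le0 => u u1.
have bound m : (0 < m)%N -> delta0 (u *: x) <= (1 + 2 * C0) / m%:R.
  move=> m_gt0; have [del del_gt0 scale_near] := scale_cont (u *+ m) x 1 ltr01.
  have [y y_E0 dxy] := x_cl del del_gt0.
  have dm : d ((u *: x) *+ m) ((u *: y) *+ m) < 1.
    by rewrite !scalerMnl; apply: scale_near; rewrite // subrr absK0.
  rewrite -(subrK (u *: y) (u *: x)) addrC; apply: (le_trans (delta0D _ _)).
  rewrite y_E0 // add0r; apply: (le_trans (delta0_le _ m_gt0)).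
  rewrite ler_wpM2r ?invr_ge0 // mulrnBl.
  by have := d0B ((u *: x) *+ m) ((u *: y) *+ m); lra.
apply: (ler_cvg_to (cvg_cst _) (cvg_divn (1 + 2 * C0))).
by near=> m; apply: bound; near: m; exact: nbhs_infty_gt.
Unshelve. all: by end_near. Qed.

End AsymptoticDistance.

Theorem proposition5 (R : realType) (k : scalar_kind) (E : lmodType (scal R k))
    (d : E -> E -> R) (C0 C1 C2 C3 : R) :
  metric_vector_space d ->
  translation_invariant d C0 ->
  lipschitz_multiplicative d C1 C2 C3 ->
  is_subspace (E0 d) /\ d_closed d (E0 d).
Proof.
move=> d_mvs d_transl d_lip; split.
  exact: E0_subspace d_mvs.1 d_transl d_lip.
exact: E0_closed d_mvs.1 d_transl d_mvs.
Qed.
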